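(* Let $(X,\widetilde{\tau},\mathfrak{a}_E,E)$ be a soft aura topological space and $(G,E)\in\mathrm{SS}(X,E)$. Then: if $(G,E)$ is soft $\mathfrak{a}$-open it is soft $\mathfrak{a}$-$\alpha$-open; if it is soft $\mathfrak{a}$-$\alpha$-open it is both soft $\mathfrak{a}$-semi-open and soft $\mathfrak{a}$-pre-open; if it is soft $\mathfrak{a}$-semi-open or soft $\mathfrak{a}$-pre-open it is soft $\mathfrak{a}$-$b$-open; and if it is soft $\mathfrak{a}$-$b$-open it is soft $\mathfrak{a}$-$\beta$-open.
   Context: Let $X$ be a nonempty set and $E$ a nonempty parameter set. A soft set over $X$ is a map $F:E\to\mathcal{P}(X)$, written $(F,E)$; $\mathrm{SS}(X,E)$ denotes all soft sets; $\sqsubseteq$, $\sqcup$ are parameterwise inclusion and union. A soft topology $\widetilde{\tau}$ is a subfamily of $\mathrm{SS}(X,E)$ containing the soft sets with all values $\emptyset$ and all values $X$, closed under arbitrary soft unions and finite soft intersections. A soft scope function is a map $\mathfrak{a}_E:X\to\widetilde{\tau}$ with $x\in\mathfrak{a}_E(x)(e)$ for all $x\in X$, $e\in E$; $(X,\widetilde{\tau},\mathfrak{a}_E,E)$ is a soft aura topological space. $\mathrm{cl}_{\mathfrak{a}}(G,E)(e)=\{x:\mathfrak{a}_E(x)(e)\cap G(e)\neq\emptyset\}$, $\mathrm{int}_{\mathfrak{a}}(G,E)(e)=\{x:\mathfrak{a}_E(x)(e)\subseteq G(e)\}$. $(G,E)$ is: soft $\mathfrak{a}$-open if $\mathrm{int}_{\mathfrak{a}}(G,E)=(G,E)$;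 soft $\mathfrak{a}$-semi-open if $(G,E)\sqsubseteq\mathrm{cl}_{\mathfrak{a}}(\mathrm{int}_{\mathfrak{a}}(G,E))$; soft $\mathfrak{a}$-pre-open if $(G,E)\sqsubseteq\mathrm{int}_{\mathfrak{a}}(\mathrm{cl}_{\mathfrak{a}}(G,E))$; soft $\mathfrak{a}$-$\alpha$-open if $(G,E)\sqsubseteq\mathrm{int}_{\mathfrak{a}}(\mathrm{cl}_{\mathfrak{a}}(\mathrm{int}_{\mathfrak{a}}(G,E)))$; soft $\mathfrak{a}$-$\beta$-open if $(G,E)\sqsubseteq\mathrm{cl}_{\mathfrak{a}}(\mathrm{int}_{\mathfrak{a}}(\mathrm{cl}_{\mathfrak{a}}(G,E)))$; soft $\mathfrak{a}$-$b$-open if $(G,E)\sqsubseteq\mathrm{cl}_{\mathfrak{a}}(\mathrm{int}_{\mathfrak{a}}(G,E))\sqcup\mathrm{int}_{\mathfrak{a}}(\mathrm{cl}_{\mathfrak{a}}(G,E))$. *)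

Set Implicit Arguments.

Definition soft_set (X E : Type) := E -> X -> Prop.

Definition soft_sub {X E : Type} (F G : soft_set X E) : Prop :=
  forall e x, F e x -> G e x.

Definition soft_union {X E : Type} (F G : soft_set X E) : soft_set X E :=
  fun e x => F e x \/ G e x.

Definition soft_inter {X E : Type} (F G : soft_set X E) : soft_set X E :=
  fun e x => F e x /\ G e x.

Definition soft_null {X E : Type} : soft_set X E := fun _ _ => False.
Definition soft_abs {X E : Type} : soft_set X E := fun _ _ => True.

Definition soft_bigunion {X E : Type} (Fam : soft_set X E -> Prop) : soft_set X E :=
  fun e x => exists F, Fam F /\ F e x.

Definition soft_topology {X E : Type} (tau : soft_set X E -> Prop) : Prop :=
  tau soft_null /\ tau soft_abs /\
  (forall Fam : soft_set X E -> Prop,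
      (forall F, Fam F -> tau F) -> tau (soft_bigunion Fam)) /\
  (forall F G, tau F -> tau G -> tau (soft_inter F G)).

Definition soft_scope {X E : Type} (tau : soft_set X E -> Prop)
  (a : X -> soft_set X E) : Prop :=
  (forall x, tau (a x)) /\ (forall x e, a x e x).

Definition cl_a {X E : Type} (a : X -> soft_set X E) (G : soft_set X E) : soft_set X E :=
  fun e x => exists y, a x e y /\ G e y.

Definition int_a {X E : Type} (a : X -> soft_set X E) (G : soft_set X E) : soft_set X E :=
  fun e x => forall y, a x e y -> G e y.

Definition soft_a_open {X E : Type} (a : X -> soft_set X E) (G : soft_set X E) : Prop :=
  int_a a G = G.
Definition soft_a_semi_open {X E : Type} (a : X -> soft_set X E) (G : soft_set X E) : Prop :=
  soft_sub G (cl_a a (int_a a G)).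
Definition soft_a_pre_open {X E : Type} (a : X -> soft_set X E) (G : soft_set X E) : Prop :=
  soft_sub G (int_a a (cl_a a G)).
Definition soft_a_alpha_open {X E : Type} (a : X -> soft_set X E) (G : soft_set X E) : Prop :=
  soft_sub G (int_a a (cl_a a (int_a a G))).
Definition soft_a_beta_open {X E : Type} (a : X -> soft_set X E) (G : soft_set X E) : Prop :=
  soft_sub G (cl_a a (int_a a (cl_a a G))).
Definition soft_a_b_open {X E : Type} (a : X -> soft_set X E) (G : soft_set X E) : Prop :=
  soft_sub G (soft_union (cl_a a (int_a a G)) (int_a a (cl_a a G))).

(* Only the reflexivity x ∈ a_E(x)(e) of the scope function matters: it gives
   int_a G ⊑ G ⊑ cl_a G, and together with the monotonicity of int_a and cl_a
   every implication is a chain of inclusions. *)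

Section SoftAuraOpenness.

Variables X E : Type.
Variable a : X -> soft_set X E.

Lemma soft_sub_refl (F : soft_set X E) : soft_sub F F.
Proof. intros e x Fx; exact Fx. Qed.

Lemma soft_sub_trans {F G H : soft_set X E} :
  soft_sub F G -> soft_sub G H -> soft_sub F H.
Proof. intros FG GH e x Fx; apply GH, FG, Fx. Qed.

Lemma soft_sub_union_l (F G : soft_set X E) : soft_sub F (soft_union F G).
Proof. intros e x Fx; left; exact Fx. Qed.

Lemma soft_sub_union_r (F G : soft_set X E) : soft_sub G (soft_union F G).
Proof. intros e x Gx; right; exact Gx. Qed.

Lemma soft_union_sub (F G H : soft_set X E) :
  soft_sub F H -> soft_sub G H -> soft_sub (soft_union F G) H.
Proof. intros FH GH e x [Fx | Gx]; [apply FH | apply GH]; assumption. Qed.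

Lemma int_a_mono (F G : soft_set X E) :
  soft_sub F G -> soft_sub (int_a a F) (int_a a G).
Proof. intros FG e x intF y axy; apply FG, intF, axy. Qed.

Lemma cl_a_mono (F G : soft_set X E) :
  soft_sub F G -> soft_sub (cl_a a F) (cl_a a G).
Proof. intros FG e x [y [axy Fy]]; exists y; split; [exact axy | apply FG, Fy]. Qed.

Hypothesis a_refl : forall x e, a x e x.

Lemma int_a_sub (G : soft_set X E) : soft_sub (int_a a G) G.
Proof. intros e x intG; apply intG, a_refl. Qed.

Lemma sub_cl_a (G : soft_set X E) : soft_sub G (cl_a a G).
Proof. intros e x Gx; exists x; split; [apply a_refl | exact Gx]. Qed.

Lemma soft_a_open_alpha_open (G : soft_set X E) :
  soft_a_open a G -> soft_a_alpha_open a G.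
Proof.
  unfold soft_a_open; intros openG.
  apply (@soft_sub_trans G (int_a a G)).
  - rewrite openG; apply soft_sub_refl.
  - apply int_a_mono; rewrite openG; apply sub_cl_a.
Qed.

Lemma soft_a_alpha_open_semi_open (G : soft_set X E) :
  soft_a_alpha_open a G -> soft_a_semi_open a G.
Proof. intros alphaG; exact (soft_sub_trans alphaG (int_a_sub _)). Qed.

Lemma soft_a_alpha_open_pre_open (G : soft_set X E) :
  soft_a_alpha_open a G -> soft_a_pre_open a G.
Proof.
  intros alphaG; apply (soft_sub_trans alphaG).
  apply int_a_mono, cl_a_mono, int_a_sub.
Qed.

Lemma soft_a_semi_open_b_open (G : soft_set X E) :
  soft_a_semi_open a G -> soft_a_b_open a G.
Proof. intros semiG; exact (soft_sub_trans semiG (soft_sub_union_l _ _)). Qed.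

Lemma soft_a_pre_open_b_open (G : soft_set X E) :
  soft_a_pre_open a G -> soft_a_b_open a G.
Proof. intros preG; exact (soft_sub_trans preG (soft_sub_union_r _ _)). Qed.

Lemma soft_a_b_open_beta_open (G : soft_set X E) :
  soft_a_b_open a G -> soft_a_beta_open a G.
Proof.
  intros bG; apply (soft_sub_trans bG), soft_union_sub.
  - apply cl_a_mono, int_a_mono, sub_cl_a.
  - apply sub_cl_a.
Qed.

End SoftAuraOpenness.

Theorem theorem4p2 (X E : Type) (x0 : X) (e0 : E)
  (tau : soft_set X E -> Prop) (a : X -> soft_set X E)
  (Htau : soft_topology tau) (Ha : soft_scope tau a) (G : soft_set X E) :
  (soft_a_open a G -> soft_a_alpha_open a G) /\
  (soft_a_alpha_open a G -> soft_a_semi_open a G /\ soft_a_pre_open a G) /\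
  (soft_a_semi_open a G \/ soft_a_pre_open a G -> soft_a_b_open a G) /\
  (soft_a_b_open a G -> soft_a_beta_open a G).
Proof.
  destruct Ha as [_ a_refl].
  split; [| split; [| split]].
  - apply soft_a_open_alpha_open, a_refl.
  - intros alphaG; split.
    + apply soft_a_alpha_open_semi_open; assumption.
    + apply soft_a_alpha_open_pre_open; assumption.
  - intros [semiG | preG].
    + apply soft_a_semi_open_b_open; assumption.
    + apply soft_a_pre_open_b_open; assumption.
  - apply soft_a_b_open_beta_open, a_refl.
Qed.
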